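(* Let $[\frac pq]$ be a rational 2-tangle ($\gcd(p,q)=1$). Then $[\frac pq]$ is $5$-move equivalent to: $[\frac10]$ if $q\equiv 0$, $p\equiv\pm1\pmod 5$; $[\frac25]$ if $q\equiv0$, $p\equiv\pm2\pmod 5$; $[0]$ if $q\equiv\pm1$, $p\equiv0\pmod5$; $[\frac52]$ if $q\equiv\pm2$, $p\equiv 0\pmod5$; $[-1]$ if $q\equiv\pm1$, $p\equiv-q\pmod5$; $[\frac32]$ if $q\equiv\pm2$, $p\equiv -q\pmod 5$; $[1]$ if $q\equiv\pm1$, $p\equiv q\pmod5$; $[-\frac32]$ if $q\equiv\pm2$, $p\equiv q\pmod5$; $[-2]$ if $q\equiv\pm1$, $p\equiv-2q\pmod5$; $[\frac12]$ if $q\equiv\pm2$, $p\equiv-2q\pmod5$; $[2]$ if $q\equiv\pm1$, $p\equiv 2q\pmod5$; $[-\frac12]$ if $q\equiv\pm2$, $p\equiv2q\pmod5$. Succinctly, two rational tangles $[\frac pq]$ and $[\frac{p'}{q'}]$ are $5$-move equivalent if and only if either $q\equiv q'$ and $p\equiv p'\pmod 5$, or $q\equiv -q'$ and $p\equiv -p'\pmod5$.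
   Context: 2-tangles are considered in a ball with four boundary points NW, NE, SW, SE, up to isotopy fixing the boundary. $[\frac pq]$ denotes the rational tangle with fraction $p/q\in\mathbb Q\cup\{\infty\}$ in Conway's notation: $[0]$ is two horizontal arcs (NW–NE, SW–SE), $[\frac10]$ two vertical arcs, $[n]$ is $|n|$ horizontal half-twists, $[\frac1n]$ is $|n|$ vertical half-twists. A $5$-move replaces a sub-tangle $[0]$ (inside a ball meeting the tangle in two arcs) by the tangle $[5]$ of five half-twists; $5$-move equivalence of tangles is generated by isotopy rel boundary and $5$-moves and their inverses performed inside the tangle ball. *)

(* Combinatorial model of unoriented 2-tangles (in a ball with
   boundary points NW, NE, SW, SE) up to isotopy rel boundary:
   tangle diagrams in Morse position, i.e. words of elementary slices
   (cup / cap / crossing at a given position), read from BOTTOM to TOP.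
   The bottom endpoints are SW (position 0), SE (position 1), the top ones
   NW (position 0), NE (position 1).  Isotopy rel boundary is the equivalence
   generated by the standard complete set of local moves for Morse-position
   diagrams (far commutation, zig-zag, Reidemeister I, II, III, and sliding a
   strand past a critical point). *)
From Stdlib Require Import List ZArith Arith Relations.
Import ListNotations.

Inductive kind : Type :=
| KCup
| KCap
| KCrs (s : bool).    (* crossing of two adjacent strands; [true] is the
                         crossing of the tangle [1] *)

(* [G k i] : the elementary slice of kind [k] whose leftmost affected strand
   is at position [i] (positions counted from the left, starting at 0). *)
Inductive gen : Type := G (k : kind) (i : nat).

Definition din (k : kind) : nat := match k with KCup => 0 | _ => 2 end.
Definition dout (k : kind) : nat := match k with KCap => 0 | _ => 2 end.

Definition gen_arity (n : nat) (g : gen) : option nat :=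
  match g with
  | G k i => if i + din k <=? n then Some (n - din k + dout k) else None
  end.

Fixpoint arity (n : nat) (w : list gen) : option nat :=
  match w with
  | [] => Some n
  | g :: w' => match gen_arity n g with
               | Some m => arity m w'
               | None => None
               end
  end.

Definition tangle2 (w : list gen) : Prop := arity 2 w = Some 2.

Definition X (s : bool) (i : nat) : gen := G (KCrs s) i.

Inductive isotopy_move : list gen -> list gen -> Prop :=
| mv_far a b i d :
    isotopy_move [G a i; G b (i + dout a + d)] [G b (i + din a + d); G a i]
| mv_zigzag_l i : isotopy_move [G KCup (S i); G KCap i] []
| mv_zigzag_r i : isotopy_move [G KCup i; G KCap (S i)] []
| mv_R1_cup s i : isotopy_move [G KCup i; X s i] [G KCup i]
| mv_R1_cap s i : isotopy_move [X s i; G KCap i] [G KCap i]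
| mv_R2 s i : isotopy_move [X s i; X (negb s) i] []
| mv_R3 s i : isotopy_move [X s i; X s (S i); X s i] [X s (S i); X s i; X s (S i)]
| mv_slide_cup s i :
    isotopy_move [G KCup i; X s (S i)] [G KCup (S i); X (negb s) i]
| mv_slide_cap s i :
    isotopy_move [X s (S i); G KCap i] [X (negb s) i; G KCap (S i)].

Definition local_step (mv : list gen -> list gen -> Prop) (w w' : list gen) : Prop :=
  exists a l r b k m,
    w = a ++ l ++ b /\ w' = a ++ r ++ b /\
    arity 2 a = Some k /\ arity k l = Some m /\ arity k r = Some m /\ mv l r.

Definition isotopic : list gen -> list gen -> Prop :=
  clos_refl_sym_trans _ (local_step isotopy_move).

Definition shift (s : nat) (w : list gen) : list gen :=
  map (fun g => match g with G k i => G k (i + s) end) w.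

Definition zero_tangle : list gen := [G KCap 0; G KCup 0].
Definition infty_tangle : list gen := [].
Definition one_tangle : list gen := [X true 0].
Definition mone_tangle : list gen := [X false 0].

(* horizontal sum T + S : T on the left, S on the right, NE(T)-NW(S) and
   SE(T)-SW(S) joined *)
Definition hsum (T S : list gen) : list gen :=
  [G KCup 1] ++ T ++ shift 2 S ++ [G KCap 1].
(* vertical product T * S : T below S *)
Definition vprod (T S : list gen) : list gen := T ++ S.

Fixpoint htwist (n : nat) : list gen :=
  match n with
  | O => zero_tangle
  | S m => hsum (htwist m) one_tangle
  end.

Definition five_move (l r : list gen) : Prop :=
  exists i, l = shift i zero_tangle /\ r = shift i (htwist 5).

Definition five_equiv : list gen -> list gen -> Prop :=
  clos_refl_sym_trans _
    (fun w w' => local_step isotopy_move w w' \/ local_step five_move w w').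

(* [rational T p q] : T is a rational tangle diagram with fraction p/q,
   built from [0] or [1/0] by horizontal/vertical twisting (Conway):
   F(T + [±1]) = F(T) ± 1,  1/F(T * [±1]) = 1/F(T) ± 1. *)
Inductive rational : list gen -> Z -> Z -> Prop :=
| rat_zero : rational zero_tangle 0 1
| rat_infty : rational infty_tangle 1 0
| rat_hplus T p q : rational T p q -> rational (hsum T one_tangle) (p + q) q
| rat_hminus T p q : rational T p q -> rational (hsum T mone_tangle) (p - q) q
| rat_vplus T p q : rational T p q -> rational (vprod T one_tangle) p (q + p)
| rat_vminus T p q : rational T p q -> rational (vprod T mone_tangle) p (q - p).

Definition cong5 (a b : Z) : Prop := ((a - b) mod 5 = 0)%Z.
Definition pm5 (a b : Z) : Prop := cong5 a b \/ cong5 a (- b).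

Definition five_equiv_rat (T : list gen) (a b : Z) : Prop :=
  forall T', rational T' a b -> five_equiv T T'.

(* The class of (p, q) in ((Z/5)^2 - 0)/±1, which takes 12 values, is a complete 5-move
   invariant of rational tangles.

   The twists T |-> T ± [1] and T |-> T * [±1] act linearly on fractions, hence on these
   classes.  Each class gets a representative word of twists applied to [1/0], and certified
   rewriting of diagrams shows that every twist sends a representative to a tangle 5-move
   equivalent to the representative of the image class.  Relations between twist words are
   checked once for all tangles: a twist word applied to T is isotopic to a cup, then T, then
   a tail that does not depend on T.

   Conversely, every isotopy move and the 5-move multiply the Kauffman bracket at A = 6 over
   Z/41 by a unit, so 5-move equivalent tangles have proportional 4x4 bracket matrices, while
   the matrices of the 12 representatives are pairwise non-proportional. *)

From Pilot Require Import Defs.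
From Stdlib Require Import List ZArith Arith Relations Lia Bool.
Import ListNotations.

(** * Words of slices and congruence of 5-move equivalence *)

Lemma arity_app n u v :
  arity n (u ++ v) = match arity n u with Some m => arity m v | None => None end.
Proof.
  revert n; induction u as [|g u IH]; intros n; simpl; [reflexivity|].
  destruct (gen_arity n g); auto.
Qed.

Lemma gen_arity_add n j g m : gen_arity n g = Some m -> gen_arity (n + j) g = Some (m + j).
Proof.
  destruct g as [k i]; simpl; intros E.
  destruct (Nat.leb_spec (i + din k) n); [|discriminate]. injection E as <-.
  destruct (Nat.leb_spec (i + din k) (n + j)); [f_equal; lia | lia].
Qed.

Lemma arity_add n j w m : arity n w = Some m -> arity (n + j) w = Some (m + j).
Proof.
  revert n; induction w as [|g w IH]; intros n H; simpl in *.
  - now injection H as <-.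
  - destruct (gen_arity n g) eqn:E; [|discriminate]. now rewrite (gen_arity_add _ _ _ _ E), IH.
Qed.

Lemma arity_shift j w n m : arity n w = Some m -> arity (j + n) (Defs.shift j w) = Some (j + m).
Proof.
  revert n; induction w as [|[k i] w IH]; intros n H; simpl in *.
  - now injection H as <-.
  - destruct (Nat.leb_spec (i + din k) n); [|discriminate].
    destruct (Nat.leb_spec (i + j + din k) (j + n)); [|lia].
    replace (j + n - din k + dout k) with (j + (n - din k + dout k)) by lia. auto.
Qed.

Lemma local_step_intro (mv : list gen -> list gen -> Prop) a l r b k m :
  arity 2 a = Some k -> arity k l = Some m -> arity k r = Some m -> mv l r ->
  local_step mv (a ++ l ++ b) (a ++ r ++ b).
Proof. intros Ha Hl Hr H. exists a, l, r, b, k, m. repeat split; auto. Qed.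

Lemma local_step_app_r mv Q w w' : local_step mv w w' -> local_step mv (w ++ Q) (w' ++ Q).
Proof.
  intros (a & l & r & b & k & m & -> & -> & Ha & Hl & Hr & H).
  rewrite <- !app_assoc. now apply local_step_intro with k m.
Qed.

Lemma local_step_app_l mv P j w w' :
  arity 2 P = Some (2 + j) -> local_step mv w w' -> local_step mv (P ++ w) (P ++ w').
Proof.
  intros HP (a & l & r & b & k & m & -> & -> & Ha & Hl & Hr & H).
  rewrite !(app_assoc P a).
  apply local_step_intro with (k + j) (m + j); auto using arity_add.
  rewrite arity_app, HP. now apply arity_add.
Qed.

Lemma clos_rst_map {A} (R R' : relation A) (f : A -> A) :
  (forall x y, R x y -> R' (f x) (f y)) ->
  forall x y, clos_refl_sym_trans A R x y -> clos_refl_sym_trans A R' (f x) (f y).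
Proof.
  intros Hf x y H; induction H; [apply rst_step; auto | apply rst_refl
  | apply rst_sym; auto | eapply rst_trans; eauto].
Qed.

Lemma five_equiv_app_r w w' Q : five_equiv w w' -> five_equiv (w ++ Q) (w' ++ Q).
Proof.
  apply (clos_rst_map _ _ (fun x => x ++ Q)).
  intros x y [H|H]; [left|right]; now apply local_step_app_r.
Qed.

Lemma five_equiv_app_l P j w w' :
  arity 2 P = Some (2 + j) -> five_equiv w w' -> five_equiv (P ++ w) (P ++ w').
Proof.
  intros HP; apply (clos_rst_map _ _ (app P)).
  intros x y [H|H]; [left|right]; now apply local_step_app_l with j.
Qed.

Lemma five_equiv_far_commute T : forall n m, arity n T = Some m -> forall k e r P Q,
  arity 2 P = Some (n + e + din k + r) ->
  five_equiv (P ++ G k (n + e) :: T ++ Q) (P ++ T ++ G k (m + e) :: Q).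
Proof.
  induction T as [|[a i] T IH]; intros n m HT k e r P Q HP; simpl in HT.
  - injection HT as <-; apply rst_refl.
  - destruct (Nat.leb_spec (i + din a) n) as [Hle|]; [|discriminate].
    set (n' := n - din a + dout a) in *.
    eapply rst_trans.
    + apply rst_sym, rst_step; left.
      apply (local_step_intro _ P [G a i; G k (n' + e)] [G k (n + e); G a i] (T ++ Q)
               (n + e + din k + r) (n' + e + dout k + r)); [exact HP| | |].
      * simpl. destruct (Nat.leb_spec (i + din a) (n + e + din k + r)); [|lia].
        destruct (Nat.leb_spec (n' + e + din k) (n + e + din k + r - din a + dout a)); [|lia].
        f_equal; lia.
      * simpl. destruct (Nat.leb_spec (n + e + din k) (n + e + din k + r)); [|lia].
        destruct (Nat.leb_spec (i + din a) (n + e + din k + r - din k + dout k)); [|lia].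
        f_equal; lia.
      * replace (n' + e) with (i + dout a + (n - i - din a + e)) by lia.
        replace (n + e) with (i + din a + (n - i - din a + e)) by lia.
        apply mv_far.
    + specialize (IH n' m HT k e r (P ++ [G a i]) Q).
      rewrite <- !app_assoc in IH. apply IH.
      rewrite arity_app, HP; simpl.
      destruct (Nat.leb_spec (i + din a) (n + e + din k + r)); [|lia]. f_equal; lia.
Qed.

(** * Certified rewriting of diagrams *)

Definition gen_eq_dec (g h : gen) : {g = h} + {g <> h}.
Proof. repeat decide equality. Defined.

Inductive rule : Type :=
| rl_far (a b : kind) (i d : nat) | rl_zigzag_l (i : nat) | rl_zigzag_r (i : nat)
| rl_R1_cup (s : bool) (i : nat) | rl_R1_cap (s : bool) (i : nat) | rl_R2 (s : bool) (i : nat)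
| rl_R3 (s : bool) (i : nat) | rl_slide_cup (s : bool) (i : nat) | rl_slide_cap (s : bool) (i : nat)
| rl_five (i : nat).

Definition rule_lhs (r : rule) : list gen :=
  match r with
  | rl_far a b i d => [G a i; G b (i + dout a + d)]
  | rl_zigzag_l i => [G KCup (S i); G KCap i]
  | rl_zigzag_r i => [G KCup i; G KCap (S i)]
  | rl_R1_cup s i => [G KCup i; X s i]
  | rl_R1_cap s i => [X s i; G KCap i]
  | rl_R2 s i => [X s i; X (negb s) i]
  | rl_R3 s i => [X s i; X s (S i); X s i]
  | rl_slide_cup s i => [G KCup i; X s (S i)]
  | rl_slide_cap s i => [X s (S i); G KCap i]
  | rl_five i => Defs.shift i zero_tangle
  end.

Definition rule_rhs (r : rule) : list gen :=
  match r with
  | rl_far a b i d => [G b (i + din a + d); G a i]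
  | rl_zigzag_l _ | rl_zigzag_r _ | rl_R2 _ _ => []
  | rl_R1_cup s i => [G KCup i]
  | rl_R1_cap s i => [G KCap i]
  | rl_R3 s i => [X s (S i); X s i; X s (S i)]
  | rl_slide_cup s i => [G KCup (S i); X (negb s) i]
  | rl_slide_cap s i => [X (negb s) i; G KCap (S i)]
  | rl_five i => Defs.shift i (htwist 5)
  end.

Lemma rule_valid r : isotopy_move (rule_lhs r) (rule_rhs r) \/ five_move (rule_lhs r) (rule_rhs r).
Proof. destruct r; simpl; try (left; constructor). right; now exists i. Qed.

(* [(p, r, true)] rewrites the left side of [r] at position [p] into its right side,
   [(p, r, false)] the right side into the left side. *)
Definition rewrite_step (n : nat) (w : list gen) (st : nat * rule * bool) : option (list gen) :=
  let '(p, r, fwd) := st in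
  let l := if fwd then rule_lhs r else rule_rhs r in
  let r' := if fwd then rule_rhs r else rule_lhs r in
  let rest := skipn p w in
  if list_eq_dec gen_eq_dec (firstn (length l) rest) l then
    match arity n (firstn p w) with
    | Some k =>
        match arity k l, arity k r' with
        | Some m1, Some m2 =>
            if Nat.eqb m1 m2 then Some (firstn p w ++ r' ++ skipn (length l) rest) else None
        | _, _ => None
        end
    | None => None
    end
  else None.

Fixpoint rewrite_run (n : nat) (w : list gen) (sts : list (nat * rule * bool)) :
    option (list gen) :=
  match sts with
  | [] => Some w
  | st :: sts' => match rewrite_step n w st with Some w1 => rewrite_run n w1 sts' | None => None end
  end.

Lemma rewrite_step_sound n w st w' P :
  arity 2 P = Some n -> rewrite_step n w st = Some w' -> five_equiv (P ++ w) (P ++ w').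
Proof.
  destruct st as [[p r] fwd]; unfold rewrite_step; intros HP E.
  set (l := if fwd then rule_lhs r else rule_rhs r) in *.
  set (r' := if fwd then rule_rhs r else rule_lhs r) in *.
  destruct (list_eq_dec _ _ l) as [Hpre|]; [|discriminate].
  destruct (arity n (firstn p w)) as [k|] eqn:Ha; [|discriminate].
  destruct (arity k l) as [m1|] eqn:Hl; [|discriminate].
  destruct (arity k r') as [m2|] eqn:Hr; [|discriminate].
  destruct (Nat.eqb_spec m1 m2) as [<-|]; [|discriminate]. injection E as <-.
  assert (Hw : w = firstn p w ++ l ++ skipn (length l) (skipn p w)).
  { pose proof (firstn_skipn (length l) (skipn p w)) as Hrest; rewrite Hpre in Hrest.
    rewrite Hrest; symmetry; apply firstn_skipn. }
  rewrite Hw at 1; rewrite !(app_assoc P (firstn p w)).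
  assert (HPa : arity 2 (P ++ firstn p w) = Some k) by now rewrite arity_app, HP.
  destruct fwd; subst l r'; [apply rst_step | apply rst_sym, rst_step];
    (destruct (rule_valid r); [left|right]); now apply local_step_intro with k m1.
Qed.

Lemma rewrite_run_sound n sts : forall w w' P,
  arity 2 P = Some n -> rewrite_run n w sts = Some w' -> five_equiv (P ++ w) (P ++ w').
Proof.
  induction sts as [|st sts IH]; simpl; intros w w' P HP E.
  - injection E as <-; apply rst_refl.
  - destruct (rewrite_step n w st) as [w1|] eqn:E1; [|discriminate].
    eapply rst_trans; [eapply rewrite_step_sound|eapply IH]; eauto.
Qed.

Lemma rewrite_run_sound2 sts w w' : rewrite_run 2 w sts = Some w' -> five_equiv w w'.
Proof. exact (rewrite_run_sound 2 sts w w' [] eq_refl). Qed.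

(** * Words of twists *)

Inductive twist_op : Type := Hp | Hm | Vp | Vm.

Definition twist_op_eq_dec (x y : twist_op) : {x = y} + {x <> y}.
Proof. decide equality. Defined.

Definition twist (x : twist_op) (T : list gen) : list gen :=
  match x with
  | Hp => hsum T one_tangle
  | Hm => hsum T mone_tangle
  | Vp => vprod T one_tangle
  | Vm => vprod T mone_tangle
  end.

Definition twists (w : list twist_op) (T : list gen) : list gen := fold_right twist T w.

Lemma twists_app u v T : twists (u ++ v) T = twists u (twists v T).
Proof. apply fold_right_app. Qed.

Lemma tangle2_hsum T S : tangle2 T -> tangle2 S -> tangle2 (hsum T S).
Proof.
  unfold tangle2, hsum; intros HT HS; simpl.
  apply (arity_add _ 2) in HT; simpl in HT. rewrite arity_app, HT.
  apply (arity_shift 2) in HS; simpl in HS. now rewrite arity_app, HS.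
Qed.

Lemma tangle2_twists w T : tangle2 T -> tangle2 (twists w T).
Proof.
  intros HT; induction w as [|[] w IH]; simpl; auto;
    try (apply tangle2_hsum; [exact IH | reflexivity]);
    unfold tangle2, vprod in *; now rewrite arity_app, IH.
Qed.

Lemma five_equiv_twist x T T' : five_equiv T T' -> five_equiv (twist x T) (twist x T').
Proof.
  intros H; destruct x; simpl; unfold hsum, vprod; auto using five_equiv_app_r;
    apply (five_equiv_app_l [G KCup 1] 2); auto using five_equiv_app_r.
Qed.

Lemma five_equiv_twists w T T' : five_equiv T T' -> five_equiv (twists w T) (twists w T').
Proof. intros H; induction w; simpl; auto using five_equiv_twist. Qed.

(* The cups opening the horizontal sums all slide below [T], so that [twists w T] is
   isotopic to [G KCup 1], then [T], then a word [twist_tail w] that does not depend on [T]. *)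
Fixpoint twist_tail (w : list twist_op) : list gen :=
  match w with
  | [] => [G KCap 2]
  | Hp :: w' => G KCup 3 :: twist_tail w' ++ [X true 2; G KCap 1]
  | Hm :: w' => G KCup 3 :: twist_tail w' ++ [X false 2; G KCap 1]
  | Vp :: w' => twist_tail w' ++ [X true 0]
  | Vm :: w' => twist_tail w' ++ [X false 0]
  end.

Lemma twists_normal_form w T :
  tangle2 T -> five_equiv (twists w T) ([G KCup 1] ++ T ++ twist_tail w).
Proof.
  intros HT; induction w as [|x w IH]; simpl.
  - eapply rst_trans.
    + apply (rewrite_run_sound2 [(0, rl_zigzag_r 1, false)] T ([G KCup 1; G KCap 2] ++ T)).
      reflexivity.
    + pose proof (five_equiv_far_commute T 2 2 HT KCap 0 0 [G KCup 1] []) as H; simpl in H.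
      rewrite app_nil_r in H. now apply H.
  - assert (IH' : five_equiv (twist x (twists w T)) (twist x ([G KCup 1] ++ T ++ twist_tail w)))
      by now apply five_equiv_twist.
    eapply rst_trans; [exact IH'|]; clear IH'.
    destruct x; simpl; unfold hsum, vprod; rewrite <- ?app_assoc; try apply rst_refl.
    all: eapply rst_trans;
      [ apply (rewrite_run_sound2 [(0, rl_far KCup KCup 1 0, false)]); reflexivity | simpl ].
    all: pose proof (five_equiv_far_commute T 2 2 HT KCup 1 1 [G KCup 1]) as H; simpl in H;
      rewrite <- app_assoc; now apply H.
Qed.

Lemma twists_relation_sound r1 r2 sts :
  rewrite_run 4 (twist_tail r1) sts = Some (twist_tail r2) ->
  forall T, tangle2 T -> five_equiv (twists r1 T) (twists r2 T).
Proof.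
  intros E T HT.
  eapply rst_trans; [apply twists_normal_form; auto|].
  eapply rst_trans; [|apply rst_sym, twists_normal_form; auto].
  rewrite !app_assoc. apply (rewrite_run_sound 4 sts); [exact (arity_add 2 2 T 2 HT) | exact E].
Qed.

Definition twist_rels : Type := list (list twist_op * list twist_op).

Definition relations_valid (R : twist_rels) : Prop :=
  forall s t, In (s, t) R -> forall T, tangle2 T -> five_equiv (twists s T) (twists t T).

Definition identities_valid (E : twist_rels) : Prop :=
  forall s t, In (s, t) E -> five_equiv (twists s []) (twists t []).

(* A step [(p, j, fwd, false)] uses the relation [R_j] at position [p] of the word;
   a step [(p, j, fwd, true)] uses the identity [E_j], which only holds applied to
   [infty_tangle], at the end of the word ([p] is then ignored). *)
Definition twist_rewrite_step (R E : twist_rels) (w : list twist_op)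
    (st : nat * nat * bool * bool) : option (list twist_op) :=
  let '(p, j, fwd, bottom) := st in
  match nth_error (if bottom then E else R) j with
  | Some (s, t) =>
      let l := if fwd then s else t in
      let r := if fwd then t else s in
      if bottom then
        let q := length w - length l in
        if list_eq_dec twist_op_eq_dec (skipn q w) l then Some (firstn q w ++ r) else None
      else
        if list_eq_dec twist_op_eq_dec (firstn (length l) (skipn p w)) l
        then Some (firstn p w ++ r ++ skipn (length l) (skipn p w)) else None
  | None => None
  end.

Fixpoint twist_rewrite_run R E w (sts : list (nat * nat * bool * bool)) : option (list twist_op) :=
  match sts with
  | [] => Some w
  | st :: sts' =>
      match twist_rewrite_step R E w st with
      | Some w1 => twist_rewrite_run R E w1 sts'
      | None => None
      end
  end.

Section TwistRewriting.

Variables R E : twist_rels.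
Hypothesis R_valid : relations_valid R.
Hypothesis E_valid : identities_valid E.

Lemma twist_rewrite_step_sound w st w' :
  twist_rewrite_step R E w st = Some w' -> five_equiv (twists w []) (twists w' []).
Proof.
  destruct st as [[[p j] fwd] bottom]; unfold twist_rewrite_step.
  destruct (nth_error (if bottom then E else R) j) as [[s t]|] eqn:En; [|discriminate].
  apply nth_error_In in En.
  set (l := if fwd then s else t); set (r := if fwd then t else s).
  destruct bottom.
  - destruct (list_eq_dec _ _ l) as [Hsuf|]; [|discriminate]. intros Hw; injection Hw as <-.
    rewrite <- (firstn_skipn (length w - length l) w) at 1.
    rewrite Hsuf, !twists_app. apply five_equiv_twists.
    destruct fwd; subst l r; [|apply rst_sym]; now apply E_valid.
  - destruct (list_eq_dec _ _ l) as [Hpre|]; [|discriminate]. intros Hw; injection Hw as <-.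
    set (rest := skipn (length l) (skipn p w)).
    assert (Hw : w = firstn p w ++ l ++ rest).
    { pose proof (firstn_skipn (length l) (skipn p w)) as Hs; rewrite Hpre in Hs.
      unfold rest; rewrite Hs; symmetry; apply firstn_skipn. }
    rewrite Hw at 1; rewrite !twists_app. apply five_equiv_twists.
    assert (HT := tangle2_twists rest [] eq_refl).
    destruct fwd; subst l r; [|apply rst_sym]; now apply R_valid.
Qed.

Lemma twist_rewrite_run_sound sts : forall w w',
  twist_rewrite_run R E w sts = Some w' -> five_equiv (twists w []) (twists w' []).
Proof.
  induction sts as [|st sts IH]; simpl; intros w w' H.
  - injection H as <-; apply rst_refl.
  - destruct (twist_rewrite_step R E w st) eqn:E1; [|discriminate].
    eapply rst_trans; [eapply twist_rewrite_step_sound|apply IH]; eauto.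
Qed.

End TwistRewriting.

(* Each new identity may be derived from the relations and from the identities before it. *)
Fixpoint check_identities (R E : twist_rels)
    (fs : list (list twist_op * list twist_op * list (nat * nat * bool * bool))) : bool :=
  match fs with
  | [] => true
  | (s, t, d) :: fs' =>
      match twist_rewrite_run R E s d with
      | Some w => if list_eq_dec twist_op_eq_dec w t then check_identities R (E ++ [(s, t)]) fs'
                  else false
      | None => false
      end
  end.

Lemma check_identities_sound R fs : forall E,
  relations_valid R -> identities_valid E -> check_identities R E fs = true ->
  identities_valid (E ++ map (fun '(s, t, _) => (s, t)) fs).
Proof.
  induction fs as [|[[s t] d] fs IH]; intros E HR HE C; simpl in *.
  - now rewrite app_nil_r.
  - destruct (twist_rewrite_run R E s d) as [w|] eqn:Hrun; [|discriminate].
    destruct (list_eq_dec _ w t) as [->|]; [|discriminate].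
    assert (HE' : identities_valid (E ++ [(s, t)])).
    { intros s' t' Hin. apply in_app_or in Hin as [Hin|[Hin|[]]]; [now apply HE|].
      injection Hin as <- <-. eapply twist_rewrite_run_sound; eauto. }
    specialize (IH _ HR HE' C). now rewrite <- app_assoc in IH.
Qed.

(* Inverse twists, the 5-move [Hp^5 = id] and the braid-like relation [Hp Vm Hp = Vm Hp Vm]. *)
Definition relation_certificates :
    list (list twist_op * list twist_op * list (nat * rule * bool)) := [
  ([Hp; Hm], [], [(1, rl_zigzag_l 2, true); (3, rl_slide_cap true 1, true);
      (2, rl_far KCap (KCrs false) 1 0, true); (0, rl_slide_cup true 2, false);
      (1, rl_R2 true 3, true); (0, rl_zigzag_l 1, true)]);
  ([Hm; Hp], [], [(1, rl_zigzag_l 2, true); (3, rl_slide_cap false 1, true);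
      (2, rl_far KCap (KCrs true) 1 0, true); (0, rl_slide_cup false 2, false);
      (1, rl_R2 false 3, true); (0, rl_zigzag_l 1, true)]);
  ([Vp; Vm], [], [(1, rl_R2 false 0, true)]);
  ([Vm; Vp], [], [(1, rl_R2 true 0, true)]);
  ([Hp; Hp; Hp; Hp; Hp], [], [(6, rl_zigzag_l 1, false); (7, rl_far KCap (KCrs true) 1 1, true);
      (8, rl_far KCap KCap 1 0, true); (9, rl_far KCap (KCrs true) 1 1, true);
      (10, rl_far KCap KCap 1 0, true); (11, rl_far KCap (KCrs true) 1 1, true);
      (12, rl_far KCap KCap 1 0, true); (13, rl_far KCap (KCrs true) 1 1, true);
      (14, rl_far KCap KCap 1 0, true); (15, rl_far KCap (KCrs true) 1 1, true);
      (16, rl_far KCap KCap 1 0, true); (0, rl_five 2, false); (1, rl_zigzag_l 1, true)]);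
  ([Hp; Vm; Hp], [Vm; Hp; Vm], [(1, rl_zigzag_l 2, true); (0, rl_slide_cup false 2, false);
      (1, rl_far KCap (KCrs false) 1 0, false); (0, rl_zigzag_l 1, true);
      (2, rl_slide_cap true 1, true); (0, rl_R3 false 0, false);
      (2, rl_far (KCrs false) KCap 0 0, true); (1, rl_slide_cap true 1, false);
      (0, rl_zigzag_l 2, false)])].

Definition twist_relations : twist_rels := map (fun '(a, b, _) => (a, b)) relation_certificates.

Lemma twist_relations_valid : relations_valid twist_relations.
Proof.
  assert (C : forallb (fun '(a, b, sts) =>
                 match rewrite_run 4 (twist_tail a) sts with
                 | Some w => if list_eq_dec gen_eq_dec w (twist_tail b) then true else false
                 | None => false
                 end) relation_certificates = true) by (vm_compute; reflexivity).
  intros s t Hin T HT.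
  apply in_map_iff in Hin as [[[a b] sts] [E Hin]]; cbn in E; injection E as <- <-.
  rewrite forallb_forall in C. specialize (C _ Hin); cbv beta iota in C.
  destruct (rewrite_run 4 (twist_tail a) sts) eqn:Hrun; [|discriminate].
  destruct (list_eq_dec gen_eq_dec l (twist_tail b)) as [->|]; [|discriminate].
  eapply twists_relation_sound; eauto.
Qed.

Definition base_identities : twist_rels := [([Hp], []); ([Hp; Vm], [Hm; Vp])].

Lemma base_identities_valid : identities_valid base_identities.
Proof.
  intros s t [H|[H|[]]]; injection H as <- <-; simpl; unfold hsum, vprod; simpl.
  - apply (rewrite_run_sound2 [(0, rl_slide_cup true 1, true); (1, rl_R1_cap false 1, true);
      (0, rl_zigzag_l 1, true)]).
    vm_compute; reflexivity.
  - apply (rewrite_run_sound2 [(2, rl_slide_cap true 1, true); (3, rl_R2 false 1, false);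
      (4, rl_slide_cap false 1, false);
      (0, rl_slide_cup true 0, false); (1, rl_R2 true 1, true); (0, rl_slide_cup false 0, true)]).
    vm_compute; reflexivity.
Qed.

Definition derived_identities :
    list (list twist_op * list twist_op * list (nat * nat * bool * bool)) := [
  ([Hp], [], [(0, 0, true, true)]);
  ([Hm], [], [(0, 0, false, true); (0, 1, true, false)]);
  ([Vm; Vp], [], [(0, 3, true, false)]);
  ([Hp; Vm], [Hm; Vp], [(0, 1, true, true)]);
  ([Vp; Vm], [], [(0, 2, true, false)]);
  ([Hp; Hp; Vp], [Hm; Vm], [(2, 0, false, false); (0, 1, false, false); (0, 1, false, true);
      (1, 4, true, false)]);
  ([Hm; Hp; Vp], [Vp], [(0, 1, true, false)]);
  ([Vm; Hp; Vp], [Hm; Vm], [(0, 1, false, false); (1, 5, true, false); (3, 3, true, false);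
      (0, 0, true, true)]);
  ([Hp; Hm; Vp], [Vp], [(0, 0, true, false)]);
  ([Hm; Hm; Vp], [Vm], [(0, 1, false, true); (0, 1, true, false)]);
  ([Vp; Hm; Vp], [Hm; Vp], [(0, 1, false, true); (0, 0, false, true); (1, 5, true, false);
      (0, 2, true, false); (0, 1, true, true)]);
  ([Vm; Hm; Vp], [Hm; Vp], [(0, 12, false, true); (0, 3, true, false)]);
  ([Hp; Vp; Vp], [Vp; Hp; Vp], [(0, 2, false, false); (1, 1, false, false); (2, 5, true, false);
      (4, 3, true, false); (0, 9, true, true); (0, 7, false, true); (1, 1, true, false)]);
  ([Hm; Vp; Vp], [Vm; Vm], [(2, 0, false, false); (0, 13, false, true); (0, 1, false, true);
      (2, 5, true, false); (1, 2, true, false); (0, 1, true, false)]);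
  ([Vp; Vp; Vp], [Vm; Vm], [(1, 0, false, false); (0, 15, true, true); (3, 0, false, false);
      (1, 5, true, false); (0, 2, true, false); (0, 7, false, true); (0, 5, true, false);
      (0, 9, true, true); (1, 0, true, false)]);
  ([Vm; Vp; Vp], [Vp], [(0, 3, true, false)]);
  ([Hp; Hm; Vm], [Vm], [(0, 0, true, false)]);
  ([Hm; Hm; Vm], [Hp; Vp], [(0, 7, false, true); (0, 1, true, false)]);
  ([Vp; Hm; Vm], [Hp; Vp], [(0, 9, false, true); (0, 2, true, false)]);
  ([Hp; Vm; Vm], [Vp; Vp], [(0, 15, false, true); (0, 0, true, false)]);
  ([Hm; Vm; Vm], [Vm; Hm; Vm], [(2, 0, false, false); (0, 9, false, true); (1, 5, false, false);
      (0, 1, true, false); (0, 7, true, true)]);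
  ([Vp; Vm; Vm], [Vm], [(0, 2, true, false)]);
  ([Vm; Vm; Vm], [Vp; Vp], [(0, 16, false, true); (0, 3, true, false)]);
  ([Hm; Vp; Hp; Vp], [Vp; Vp], [(0, 14, false, true); (0, 1, true, false)]);
  ([Vm; Vp; Hp; Vp], [Hp; Vp], [(0, 3, true, false)]);
  ([Hp; Vm; Hm; Vm], [Vm; Vm], [(0, 22, false, true); (0, 0, true, false)]);
  ([Hm; Vm; Hm; Vm], [Hp; Vp; Hp; Vp], [(0, 4, false, false); (4, 0, true, false);
      (0, 27, true, true); (0, 21, true, true); (0, 14, true, true)]);
  ([Vp; Vm; Hm; Vm], [Hm; Vm], [(0, 2, true, false)]);
  ([Vm; Vm; Hm; Vm], [Vp; Vp; Hp; Vp], [(0, 2, false, false); (0, 7, false, true);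
      (5, 3, false, false); (3, 5, false, false); (2, 5, false, false); (1, 5, false, false);
      (0, 28, false, true); (4, 0, true, false); (0, 27, true, true); (0, 24, true, true);
      (0, 14, true, true)]);
  ([Hp; Hp; Vp; Hp; Vp], [Vm; Hm; Vm], [(0, 28, false, true); (0, 0, true, false)]);
  ([Hm; Hp; Vp; Hp; Vp], [Vp; Hp; Vp], [(0, 1, true, false)]);
  ([Vp; Hp; Vp; Hp; Vp], [Hp; Vp; Hp; Vp], [(0, 28, false, true); (0, 7, false, true);
      (4, 3, false, false); (2, 5, false, false); (1, 1, true, false); (0, 2, true, false)]);
  ([Vm; Hp; Vp; Hp; Vp], [Hp; Vp; Hp; Vp], [(0, 33, false, true); (0, 3, true, false)]);
  ([Hp; Vp; Vp; Hp; Vp], [Vp; Vp; Hp; Vp], [(0, 2, false, false); (1, 1, false, false);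
      (2, 5, true, false); (4, 3, true, false); (0, 34, true, true); (1, 1, true, false)]);
  ([Hm; Vp; Vp; Hp; Vp], [Vp; Vp; Hp; Vp], [(0, 35, false, true); (0, 1, true, false)]);
  ([Vp; Vp; Vp; Hp; Vp], [Vm; Hm; Vm], [(0, 30, false, true); (0, 2, true, false)]);
  ([Vm; Vp; Vp; Hp; Vp], [Vp; Hp; Vp], [(0, 3, true, false)])].

Definition twist_identities : twist_rels :=
  base_identities ++ map (fun '(s, t, _) => (s, t)) derived_identities.

Lemma twist_identities_valid : identities_valid twist_identities.
Proof.
  apply (check_identities_sound twist_relations);
    [exact twist_relations_valid | exact base_identities_valid | vm_compute; reflexivity].
Qed.

Lemma zero_tangle_twists : five_equiv zero_tangle (twists [Hm; Vp] []).
Proof.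
  simpl; unfold hsum, vprod; simpl.
  apply (rewrite_run_sound2 [(0, rl_far KCup KCap 0 0, false); (1, rl_R2 false 1, false);
    (2, rl_slide_cap false 1, false); (0, rl_slide_cup false 0, true)]).
  vm_compute; reflexivity.
Qed.

(** * Fractions modulo 5 and representative tangles *)

Local Open Scope Z_scope.

(* The orbit of the residue pair [(a, b)] under [±1]: the lexicographically smaller of
   [(a, b)] and [(-a, -b)] mod 5. *)
Definition sign_normalize (a b : Z) : Z * Z :=
  let a' := (- a) mod 5 in
  let b' := (- b) mod 5 in
  if (a' <? a) || ((a' =? a) && (b' <? b)) then (a', b') else (a, b).

Definition class_of (pq : Z * Z) : Z * Z := sign_normalize (fst pq mod 5) (snd pq mod 5).

Definition twist_fraction (x : twist_op) (pq : Z * Z) : Z * Z :=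
  let '(p, q) := pq in
  match x with
  | Hp => (p + q, q)
  | Hm => (p - q, q)
  | Vp => (p, q + p)
  | Vm => (p, q - p)
  end.

Lemma lt5_cases a : 0 <= a < 5 -> a = 0 \/ a = 1 \/ a = 2 \/ a = 3 \/ a = 4.
Proof. lia. Qed.

Ltac residue_cases a :=
  let H := fresh in
  assert (H : 0 <= a < 5) by (apply Z.mod_pos_bound; lia);
  apply lt5_cases in H; destruct H as [H|[H|[H|[H|H]]]]; rewrite H in *.

(* Expose every [e mod 5] to [lia] through the division equation and its bounds. *)
Ltac mod5_facts :=
  repeat match goal with
  | _ : context [?e mod 5] |- _ => mod5_fact e
  | |- context [?e mod 5] => mod5_fact e
  end
with mod5_fact e :=
  lazymatch goal with
  | _ : e = 5 * (e / 5) + e mod 5 |- _ => fail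
  | _ => pose proof (Z.div_mod e 5 ltac:(lia)); pose proof (Z.mod_pos_bound e 5 ltac:(lia))
  end.

Lemma class_of_twist_fraction x p q :
  class_of (twist_fraction x (p, q)) = class_of (twist_fraction x (class_of (p, q))).
Proof.
  unfold class_of at 1 3; destruct x; cbn [twist_fraction fst snd];
    [rewrite Z.add_mod | rewrite Zminus_mod | rewrite (Z.add_mod q) | rewrite (Zminus_mod q)];
    try lia; residue_cases (p mod 5); residue_cases (q mod 5); vm_compute; reflexivity.
Qed.

Lemma class_of_opp p q : class_of (- p, - q) = class_of (p, q).
Proof.
  unfold class_of; cbn [fst snd].
  pose proof (Zminus_mod 0 p) as Ep; pose proof (Zminus_mod 0 q) as Eq.
  rewrite !Z.sub_0_l in Ep, Eq. rewrite Ep, Eq.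
  residue_cases (p mod 5); residue_cases (q mod 5); vm_compute; reflexivity.
Qed.

Lemma class_of_mod p q p' q' :
  p mod 5 = p' mod 5 -> q mod 5 = q' mod 5 -> class_of (p, q) = class_of (p', q').
Proof. intros Hp Hq; unfold class_of; cbn [fst snd]; now rewrite Hp, Hq. Qed.

Lemma class_of_eq_iff p q p' q' :
  class_of (p, q) = class_of (p', q') <->
  (cong5 q q' /\ cong5 p p') \/ (cong5 q (- q') /\ cong5 p (- p')).
Proof.
  unfold cong5; split.
  - unfold class_of, sign_normalize; cbn [fst snd].
    repeat match goal with |- context [if ?b then _ else _] => destruct b end;
      intros E; injection E; intros; mod5_facts; lia.
  - intros [[Hq Hp]|[Hq Hp]].
    + apply class_of_mod; mod5_facts; lia.
    + rewrite <- (class_of_opp p' q'). apply class_of_mod; mod5_facts; lia.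
Qed.

Definition rep_table : list ((Z * Z) * list twist_op) := [
  ((1, 0), []);
  ((1, 1), [Vp]);
  ((1, 4), [Vm]);
  ((2, 1), [Hp; Vp]);
  ((0, 1), [Hm; Vp]);
  ((1, 2), [Vp; Vp]);
  ((2, 4), [Hm; Vm]);
  ((1, 3), [Vm; Vm]);
  ((2, 3), [Vp; Hp; Vp]);
  ((2, 2), [Vm; Hm; Vm]);
  ((0, 2), [Hp; Vp; Hp; Vp]);
  ((2, 0), [Vp; Vp; Hp; Vp])].

Definition classes : list (Z * Z) := map fst rep_table.

Definition zpair_eq_dec (c c' : Z * Z) : {c = c'} + {c <> c'}.
Proof. decide equality; apply Z.eq_dec. Defined.

Definition twist_rel_eq_dec (e e' : list twist_op * list twist_op) : {e = e'} + {e <> e'}.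
Proof. decide equality; apply list_eq_dec, twist_op_eq_dec. Defined.

Definition rep (c : Z * Z) : list twist_op :=
  match find (fun e => if zpair_eq_dec (fst e) c then true else false) rep_table with
  | Some e => snd e
  | None => []
  end.

Definition twist_rep_certified (x : twist_op) (c : Z * Z) : bool :=
  let c' := class_of (twist_fraction x c) in
  (if in_dec zpair_eq_dec c' classes then true else false) &&
  ((if list_eq_dec twist_op_eq_dec (x :: rep c) (rep c') then true else false) ||
   (if in_dec twist_rel_eq_dec (x :: rep c, rep c') twist_identities then true else false)).

Lemma twist_rep x c : In c classes ->
  In (class_of (twist_fraction x c)) classes /\
  five_equiv (twist x (twists (rep c) [])) (twists (rep (class_of (twist_fraction x c))) []).
Proof.
  assert (C : forallb (fun c => forallb (fun x => twist_rep_certified x c) [Hp; Hm; Vp; Vm]) classes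
              = true) by (vm_compute; reflexivity).
  intros Hc. rewrite forallb_forall in C. specialize (C c Hc). rewrite forallb_forall in C.
  assert (Cx : twist_rep_certified x c = true) by (apply C; destruct x; simpl; tauto).
  unfold twist_rep_certified in Cx.
  destruct (in_dec _ _ classes) as [Hin|]; [split; [exact Hin|]|discriminate].
  change (twist x (twists (rep c) [])) with (twists (x :: rep c) []).
  destruct (list_eq_dec _ _ _) as [->|]; [apply rst_refl|].
  destruct (in_dec _ _ twist_identities) as [Hid|]; [|discriminate].
  now apply twist_identities_valid.
Qed.

Lemma rational_class T p q :
  rational T p q ->
  In (class_of (p, q)) classes /\ five_equiv T (twists (rep (class_of (p, q))) []).
Proof.
  assert (Step : forall x T p q,
    In (class_of (p, q)) classes -> five_equiv T (twists (rep (class_of (p, q))) []) ->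
    In (class_of (twist_fraction x (p, q))) classes /\
    five_equiv (twist x T) (twists (rep (class_of (twist_fraction x (p, q)))) [])).
  { intros x T' p' q' Hc HT. rewrite class_of_twist_fraction.
    destruct (twist_rep x _ Hc) as [Hc' Hrep]. split; [exact Hc'|].
    eapply rst_trans; [apply five_equiv_twist, HT | exact Hrep]. }
  induction 1 as [| |T p q _ [Hc HT]|T p q _ [Hc HT]|T p q _ [Hc HT]|T p q _ [Hc HT]].
  - split; [vm_compute; tauto | exact zero_tangle_twists].
  - split; [vm_compute; tauto | apply rst_refl].
  - exact (Step Hp T p q Hc HT).
  - exact (Step Hm T p q Hc HT).
  - exact (Step Vp T p q Hc HT).
  - exact (Step Vm T p q Hc HT).
Qed.

Lemma five_equiv_of_class_eq T T' p q p' q' :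
  rational T p q -> rational T' p' q' -> class_of (p, q) = class_of (p', q') -> five_equiv T T'.
Proof.
  intros HT HT' E. apply rational_class in HT as [_ HT], HT' as [_ HT'].
  rewrite E in HT. eapply rst_trans; [exact HT | apply rst_sym, HT'].
Qed.

(** * The Kauffman bracket over Z/41 *)

Definition sumZ {A} (f : A -> Z) (l : list A) : Z := fold_right (fun a acc => f a + acc) 0 l.

Lemma sumZ_ext {A} (f g : A -> Z) l : (forall a, In a l -> f a = g a) -> sumZ f l = sumZ g l.
Proof. induction l as [|y l IH]; simpl; intros H; [ring|]. rewrite H, IH; auto. Qed.

Lemma sumZ_app {A} (f : A -> Z) l1 l2 : sumZ f (l1 ++ l2) = sumZ f l1 + sumZ f l2.
Proof. induction l1 as [|y l1 IH]; simpl; [ring|rewrite IH; ring]. Qed.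

Lemma sumZ_map {A B} (f : B -> Z) (h : A -> B) l : sumZ f (map h l) = sumZ (fun a => f (h a)) l.
Proof. induction l as [|y l IH]; simpl; [ring|rewrite IH; ring]. Qed.

Lemma sumZ_add_scale {A} a (f g : A -> Z) l :
  sumZ (fun x => a * f x + g x) l = a * sumZ f l + sumZ g l.
Proof. induction l as [|y l IH]; simpl; [ring|rewrite IH; ring]. Qed.

Lemma sumZ_sub_scale {A} c (f g : A -> Z) l :
  sumZ f l - c * sumZ g l = sumZ (fun x => f x - c * g x) l.
Proof. induction l as [|y l IH]; simpl; [ring|rewrite <- IH; ring]. Qed.

Lemma sumZ_zero {A} (l : list A) : sumZ (fun _ => 0) l = 0.
Proof. induction l as [|y l IH]; simpl; [ring|rewrite IH; ring]. Qed.

Lemma sumZ_divide {A} d (f : A -> Z) l : (forall a, In a l -> (d | f a)) -> (d | sumZ f l).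
Proof.
  induction l as [|y l IH]; simpl; intros H; [apply Z.divide_0_r|].
  apply Z.divide_add_r; auto.
Qed.

Fixpoint bit_strings (n : nat) : list (list bool) :=
  match n with
  | O => [[]]
  | S n' => map (cons false) (bit_strings n') ++ map (cons true) (bit_strings n')
  end.

Lemma bit_strings_length n u : In u (bit_strings n) -> length u = n.
Proof.
  revert u; induction n; simpl; intros u H; [now destruct H as [<-|[]]|].
  apply in_app_or in H as [H|H]; apply in_map_iff in H as [u' [<- H]]; simpl; f_equal; auto.
Qed.

Lemma bit_strings_complete n u : length u = n -> In u (bit_strings n).
Proof.
  revert u; induction n; intros [|b u] Hu; simpl in *; try discriminate; auto.
  injection Hu as Hu. apply in_or_app. destruct b; [right|left]; apply in_map; auto.
Qed.

Definition indicator (x : list bool) (y : list bool) : Z :=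
  if list_eq_dec bool_dec x y then 1 else 0.

Lemma indicator_cons b c x y :
  indicator (b :: x) (c :: y) = if Bool.eqb b c then indicator x y else 0.
Proof.
  unfold indicator.
  destruct (list_eq_dec bool_dec (b :: x) (c :: y)) as [E|Hne];
    destruct (list_eq_dec bool_dec x y); destruct b, c; simpl; congruence.
Qed.

Lemma sum_indicator n (F : list bool -> Z) y :
  length y = n -> sumZ (fun x => F x * indicator x y) (bit_strings n) = F y.
Proof.
  revert F y; induction n; intros F [|c y] Hy; try discriminate; simpl.
  - unfold indicator; simpl; ring.
  - injection Hy as Hy. rewrite sumZ_app, !sumZ_map.
    rewrite <- (IHn (fun x => F (c :: x)) y Hy).
    destruct c;
      [ rewrite (sumZ_ext (fun x => F (false :: x) * _) (fun _ => 0))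
      | rewrite (sumZ_ext (fun x => F (true :: x) * _) (fun _ => 0)) ];
      try (intros; rewrite indicator_cons; simpl; ring);
      rewrite sumZ_zero, ?Z.add_0_r; apply sumZ_ext; intros; rewrite indicator_cons; reflexivity.
Qed.

Fixpoint split_at (n : nat) (l : list bool) : option (list bool * list bool) :=
  match n with
  | O => Some ([], l)
  | S n' =>
      match l with
      | [] => None
      | b :: l' => match split_at n' l' with Some (y, z) => Some (b :: y, z) | None => None end
      end
  end.

Lemma split_at_app y x : split_at (length y) (y ++ x) = Some (y, x).
Proof. induction y as [|b y IH]; simpl; auto. now rewrite IH. Qed.

Lemma split_at_some n l y z : split_at n l = Some (y, z) -> l = y ++ z /\ length y = n.
Proof.
  revert l y z; induction n; intros l y z H; simpl in H; [now injection H as <- <-|].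
  destruct l as [|b l]; [discriminate|].
  destruct (split_at n l) as [[y' z']|] eqn:E; [|discriminate].
  injection H as <- <-. apply IHn in E as [-> <-]. auto.
Qed.

Lemma split_at_none n l : split_at n l = None -> (length l < n)%nat.
Proof.
  revert l; induction n; intros l H; simpl in H; [discriminate|].
  destruct l as [|b l]; simpl; [lia|].
  destruct (split_at n l) as [[y' z']|] eqn:E; [discriminate|]. apply IHn in E; lia.
Qed.

(* The Kauffman bracket with [A = 6], [A^-1 = 7] in [Z/41]: a crossing is
   [A * id + A^-1 * (cap, then cup)], and a closed loop, the product of a cap and a cup,
   is worth [5 * 1 + 1 * 33 = 38 = - A^2 - A^-2].  States are bit strings labelling the
   strands from the left. *)
Definition cup_weight (y : list bool) : Z :=
  match y with [false; true] => 5 | [true; false] => 1 | _ => 0 end.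

Definition cap_weight (u : list bool) : Z :=
  match u with [false; true] => 1 | [true; false] => 33 | _ => 0 end.

Definition crossing_weight (s : bool) (y u : list bool) : Z :=
  (if s then 6 else 7) * indicator y u + (if s then 7 else 6) * cup_weight y * cap_weight u.

Definition slice_weight (k : kind) (y u : list bool) : Z :=
  match k with KCup => cup_weight y | KCap => cap_weight u | KCrs s => crossing_weight s y u end.

(* [F] assigns a value to each state below the slice; the result is the induced value of
   each state above it. *)
Definition slice_op (k : kind) (F : list bool -> Z) (l : list bool) : Z :=
  match split_at (dout k) l with
  | Some (y, l') => sumZ (fun u => slice_weight k y u * F (u ++ l')) (bit_strings (din k))
  | None => 0
  end.

Fixpoint at_pos (i : nat) (Phi : (list bool -> Z) -> list bool -> Z)
    (F : list bool -> Z) (l : list bool) : Z :=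
  match i with
  | O => Phi F l
  | S i' => match l with [] => 0 | b :: l' => at_pos i' Phi (fun x => F (b :: x)) l' end
  end.

Definition gen_op (g : gen) (F : list bool -> Z) : list bool -> Z :=
  match g with G k i => at_pos i (slice_op k) F end.

Fixpoint bracket (w : list gen) (F : list bool -> Z) : list bool -> Z :=
  match w with [] => F | g :: w' => bracket w' (gen_op g F) end.

Lemma bracket_app u v F : bracket (u ++ v) F = bracket v (bracket u F).
Proof. revert F; induction u; simpl; auto. Qed.

Definition linear (Psi : (list bool -> Z) -> list bool -> Z) : Prop :=
  (forall F F' l, (forall x, F x = F' x) -> Psi F l = Psi F' l) /\
  (forall a F F' l, Psi (fun x => a * F x + F' x) l = a * Psi F l + Psi F' l).

Lemma linear_zero Psi : linear Psi -> forall l, Psi (fun _ => 0) l = 0.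
Proof.
  intros [Hext Hlin] l. pose proof (Hlin 1 (fun _ => 0) (fun _ => 0) l) as H.
  rewrite (Hext (fun _ => 1 * 0 + 0) (fun _ => 0)) in H by (intros; ring). lia.
Qed.

Lemma linear_sum Psi {A} (c : A -> Z) (D : A -> list bool -> Z) js l : linear Psi ->
  Psi (fun x => sumZ (fun j => c j * D j x) js) l = sumZ (fun j => c j * Psi (D j) l) js.
Proof.
  intros HL. induction js as [|j js IH]; simpl; [now apply linear_zero|].
  rewrite <- IH. apply HL.
Qed.

Lemma linear_slice_op k : linear (slice_op k).
Proof.
  unfold slice_op; split.
  - intros F F' l H. destruct (split_at (dout k) l) as [[y l']|]; auto.
    apply sumZ_ext; intros; now rewrite H.
  - intros a F F' l. destruct (split_at (dout k) l) as [[y l']|]; [|ring].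
    rewrite <- sumZ_add_scale. apply sumZ_ext; intros; ring.
Qed.

Lemma linear_at_pos i Phi : linear Phi -> linear (at_pos i Phi).
Proof.
  intros HL; induction i; simpl; auto. split.
  - intros F F' [|b l] H; auto. apply IHi. intros; apply H.
  - intros a F F' [|b l]; [ring|]. apply IHi.
Qed.

Lemma linear_bracket w : linear (bracket w).
Proof.
  induction w as [|[k i] w [Hext Hlin]]; simpl; [split; auto|].
  destruct (linear_at_pos i _ (linear_slice_op k)) as [Hext' Hlin']. split.
  - intros F F' l H. apply Hext. intros; now apply Hext'.
  - intros a F F' l. rewrite <- Hlin. apply Hext. intros; apply Hlin'.
Qed.

Lemma bracket_cong d w c F F' : d <> 0 ->
  (forall x, (d | F x - c * F' x)) -> forall l, (d | bracket w F l - c * bracket w F' l).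
Proof.
  intros Hd H l. destruct (linear_bracket w) as [Hext Hlin].
  set (Q := fun x => (F x - c * F' x) / d).
  assert (HQ : forall x, F x = d * Q x + (c * F' x + 0)).
  { intros x. unfold Q. destruct (H x) as [q Hq]. rewrite Hq, Z.div_mul by exact Hd. lia. }
  rewrite (Hext F _ l HQ), !Hlin, linear_zero by apply linear_bracket.
  exists (bracket w Q l). ring.
Qed.

Lemma at_pos_app p d Phi F l :
  at_pos (length p + d) Phi F (p ++ l) = at_pos d Phi (fun x => F (p ++ x)) l.
Proof. revert F; induction p as [|b p IH]; intros F; simpl; auto. Qed.

Lemma at_pos_short n d Phi F l : (length l < n)%nat -> at_pos (n + d) Phi F l = 0.
Proof.
  revert F l; induction n; intros F l H; simpl in *; [lia|].
  destruct l as [|b l]; auto. simpl in H. apply IHn. lia.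
Qed.

Lemma at_pos_add j i Phi F l : at_pos (j + i) Phi F l = at_pos i (at_pos j Phi) F l.
Proof.
  revert F l; induction i; intros F l; [now rewrite Nat.add_0_r|].
  rewrite Nat.add_succ_r. simpl. destruct l; auto.
Qed.

Lemma at_pos_comp i Psi Phi F l :
  at_pos i Psi (at_pos i Phi F) l = at_pos i (fun F' => Psi (Phi F')) F l.
Proof. revert F l; induction i; intros F l; simpl; auto. destruct l; auto. Qed.

Lemma at_pos_id i F l : (i <= length l)%nat -> at_pos i (fun F' => F') F l = F l.
Proof.
  revert F l; induction i; intros F l H; simpl; auto.
  destruct l as [|b l]; simpl in H; [lia|]. rewrite IHi by lia. reflexivity.
Qed.

Lemma slice_op_app k y x F : length y = dout k ->
  slice_op k F (y ++ x) = sumZ (fun u => slice_weight k y u * F (u ++ x)) (bit_strings (din k)).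
Proof. intros Hy. unfold slice_op. now rewrite <- Hy, split_at_app. Qed.

Lemma at_pos_far_commute a b d i F l :
  at_pos (i + dout a + d) (slice_op b) (at_pos i (slice_op a) F) l =
  at_pos i (slice_op a) (at_pos (i + din a + d) (slice_op b) F) l.
Proof.
  revert F l; induction i; intros F l; [simpl|destruct l as [|c l]; simpl; auto].
  destruct (split_at (dout a) l) as [[y l']|] eqn:E.
  - apply split_at_some in E as [-> Hy].
    rewrite (slice_op_app a y l') by auto. rewrite <- Hy, at_pos_app.
    destruct (linear_at_pos d _ (linear_slice_op b)) as [Hext _].
    rewrite (Hext _ (fun x =>
               sumZ (fun u => slice_weight a y u * F (u ++ x)) (bit_strings (din a))))
      by (intros x; now apply slice_op_app).
    rewrite (linear_sum (at_pos d (slice_op b)) (slice_weight a y) (fun u x => F (u ++ x)))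
      by (apply linear_at_pos, linear_slice_op).
    apply sumZ_ext. intros u Hu. apply bit_strings_length in Hu. rewrite <- Hu, at_pos_app.
    reflexivity.
  - apply split_at_none in E as Hshort. rewrite at_pos_short by auto.
    unfold slice_op at 1. now rewrite E.
Qed.

Definition supported (n : nat) (F : list bool -> Z) : Prop := forall x, length x <> n -> F x = 0.

Lemma slice_op_supported k n F :
  supported n F -> (din k <= n)%nat -> supported (n - din k + dout k) (slice_op k F).
Proof.
  intros HF Hd l Hl. unfold slice_op. destruct (split_at (dout k) l) as [[y l']|] eqn:E; auto.
  apply split_at_some in E as [-> Hy]. rewrite length_app in Hl.
  rewrite (sumZ_ext _ (fun _ => 0)); [apply sumZ_zero|].
  intros u Hu. apply bit_strings_length in Hu. rewrite HF; [ring|]. rewrite length_app. lia.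
Qed.

Lemma at_pos_supported i k n F :
  supported n F -> (i + din k <= n)%nat -> supported (n - din k + dout k) (at_pos i (slice_op k) F).
Proof.
  revert n F; induction i; intros n F HF Hn; simpl; [apply slice_op_supported; auto; lia|].
  intros [|b l] Hl; auto. simpl in Hl.
  apply (IHi (n - 1)%nat); [|lia|lia]. intros x Hx. apply HF. simpl. lia.
Qed.

Lemma bracket_supported w n m F : supported n F -> arity n w = Some m -> supported m (bracket w F).
Proof.
  revert n F; induction w as [|[k i] w IH]; intros n F HF Hw; simpl in *; [now injection Hw as <-|].
  destruct (Nat.leb_spec (i + din k) n); [|discriminate].
  eapply IH; [|exact Hw]. now apply at_pos_supported.
Qed.

Lemma slice_op_eq_on k n F F' :
  (forall x, length x = n -> F x = F' x) -> (din k <= n)%nat ->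
  forall l, length l = (n - din k + dout k)%nat -> slice_op k F l = slice_op k F' l.
Proof.
  intros HF Hd l Hl. unfold slice_op. destruct (split_at (dout k) l) as [[y l']|] eqn:E; auto.
  apply split_at_some in E as [-> Hy]. rewrite length_app in Hl.
  apply sumZ_ext. intros u Hu. apply bit_strings_length in Hu.
  rewrite HF; auto. rewrite length_app. lia.
Qed.

Lemma at_pos_eq_on i k n F F' :
  (forall x, length x = n -> F x = F' x) -> (i + din k <= n)%nat ->
  forall l, length l = (n - din k + dout k)%nat ->
  at_pos i (slice_op k) F l = at_pos i (slice_op k) F' l.
Proof.
  revert n F F'; induction i; intros n F F' HF Hn l Hl; simpl; [eapply slice_op_eq_on; eauto; lia|].
  destruct l as [|b l]; auto. simpl in Hl.
  apply (IHi (n - 1)%nat); [|lia|lia]. intros x Hx. apply HF. simpl. lia.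
Qed.

Lemma bracket_eq_on w n m F F' :
  (forall x, length x = n -> F x = F' x) -> arity n w = Some m ->
  forall l, length l = m -> bracket w F l = bracket w F' l.
Proof.
  revert n F F'; induction w as [|[k i] w IH]; intros n F F' HF Hw l Hl; simpl in *.
  - injection Hw as <-; auto.
  - destruct (Nat.leb_spec (i + din k) n); [|discriminate].
    eapply IH; [|exact Hw|exact Hl]. intros x Hx. eapply at_pos_eq_on; eauto.
Qed.

Lemma slice_op_app_r k F y z :
  (dout k <= length y)%nat -> slice_op k F (y ++ z) = slice_op k (fun x => F (x ++ z)) y.
Proof.
  intros H. destruct (split_at (dout k) y) as [[y1 y2]|] eqn:E.
  - apply split_at_some in E as [-> Hy]. rewrite <- app_assoc, !slice_op_app by auto.
    apply sumZ_ext; intros; now rewrite app_assoc.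
  - apply split_at_none in E. lia.
Qed.

Lemma at_pos_app_r i k F y z : (i + dout k <= length y)%nat ->
  at_pos i (slice_op k) F (y ++ z) = at_pos i (slice_op k) (fun x => F (x ++ z)) y.
Proof.
  revert F y; induction i; intros F y H; simpl; [now apply slice_op_app_r|].
  destruct y as [|b y]; simpl in *; [lia|]. apply (IHi (fun x => F (b :: x))). lia.
Qed.

Lemma bracket_app_r w n m F y z : arity n w = Some m -> length y = m ->
  bracket w F (y ++ z) = bracket w (fun x => F (x ++ z)) y.
Proof.
  revert n F; induction w as [|[k i] w IH]; intros n F Hw Hy; simpl in *; [reflexivity|].
  destruct (Nat.leb_spec (i + din k) n); [|discriminate].
  rewrite (IH _ _ Hw Hy). eapply bracket_eq_on; [|exact Hw|exact Hy].
  intros x Hx. apply at_pos_app_r. lia.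
Qed.

(* Strands to the right of a word are spectators: the word acts through its matrix of
   values on basis states. *)
Lemma bracket_kernel w n m F y z : arity n w = Some m -> length y = m ->
  bracket w F (y ++ z) = sumZ (fun x => bracket w (indicator x) y * F (x ++ z)) (bit_strings n).
Proof.
  intros Hw Hy. rewrite (bracket_app_r w n m F y z Hw Hy).
  rewrite (bracket_eq_on w n m _
             (fun x' => sumZ (fun x => F (x ++ z) * indicator x x') (bit_strings n)))
    by (auto; intros x Hx; now rewrite (sum_indicator n (fun x => F (x ++ z)) x Hx)).
  rewrite (linear_sum (bracket w) (fun x => F (x ++ z)) indicator) by apply linear_bracket.
  apply sumZ_ext; intros; ring.
Qed.

Lemma bracket_shift i u F l :
  (i <= length l)%nat -> bracket (Defs.shift i u) F l = at_pos i (bracket u) F l.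
Proof.
  revert F l; induction u as [|[k j] u IH]; intros F l Hl; simpl; [now rewrite at_pos_id|].
  rewrite IH by auto. rewrite <- (at_pos_comp i (bracket u) (at_pos j (slice_op k))).
  apply (proj1 (linear_at_pos i _ (linear_bracket u))). intros x. apply at_pos_add.
Qed.

Definition kernel_congruent (d : Z) (u u' : list gen) (n m : nat) (c : Z) : Prop :=
  forall x y, length x = n -> length y = m ->
    (d | bracket u (indicator x) y - c * bracket u' (indicator x) y).

Lemma bracket_window d u u' n m c i F p y z :
  arity n u = Some m -> arity n u' = Some m -> kernel_congruent d u u' n m c ->
  length p = i -> length y = m ->
  (d | bracket (Defs.shift i u) F (p ++ y ++ z) - c * bracket (Defs.shift i u') F (p ++ y ++ z)).
Proof.
  intros Hu Hu' Hk Hp Hy.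
  rewrite !bracket_shift by (rewrite length_app; lia).
  rewrite <- Hp, <- (Nat.add_0_r (length p)), !at_pos_app; simpl.
  rewrite (bracket_kernel u n m _ y z Hu Hy), (bracket_kernel u' n m _ y z Hu' Hy), sumZ_sub_scale.
  apply sumZ_divide. intros x Hx.
  replace (_ - _) with
    ((bracket u (indicator x) y - c * bracket u' (indicator x) y) * F (p ++ x ++ z))
    by ring.
  apply Z.divide_mul_l, Hk; auto using bit_strings_length.
Qed.

Lemma bracket_shift_congruent d u u' n m c i k m' F L :
  arity n u = Some m -> arity n u' = Some m -> kernel_congruent d u u' n m c ->
  (i + m <= m')%nat -> arity k (Defs.shift i u) = Some m' -> arity k (Defs.shift i u') = Some m' ->
  supported k F -> (d | bracket (Defs.shift i u) F L - c * bracket (Defs.shift i u') F L).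
Proof.
  intros Hu Hu' Hk Him Hl Hr HF.
  destruct (Nat.eq_dec (length L) m') as [HL|HL].
  - rewrite <- (firstn_skipn i L), <- (firstn_skipn m (skipn i L)).
    apply (bracket_window d u u' n m c i); auto.
    + rewrite length_firstn. lia.
    + rewrite length_firstn, length_skipn. lia.
  - rewrite (bracket_supported _ k m' F HF Hl L HL), (bracket_supported _ k m' F HF Hr L HL).
    exists 0. ring.
Qed.

(* Tabulating each intermediate function keeps [vm_compute] from re-evaluating the whole
   word below it at every state. *)
Inductive table := Leaf (z : Z) | Node (t0 t1 : table).

Fixpoint tabulate (n : nat) (F : list bool -> Z) : table :=
  match n with
  | O => Leaf (F [])
  | S n' => Node (tabulate n' (fun x => F (false :: x))) (tabulate n' (fun x => F (true :: x)))
  end.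

Fixpoint lookup (t : table) (x : list bool) : Z :=
  match t, x with
  | Leaf z, _ => z
  | Node t0 t1, b :: x' => lookup (if b then t1 else t0) x'
  | Node _ _, [] => 0
  end.

Lemma lookup_tabulate n F x : length x = n -> lookup (tabulate n F) x = F x.
Proof.
  revert F x; induction n; intros F [|b x] H; simpl in *; try discriminate; auto.
  injection H as H. destruct b; now rewrite IHn.
Qed.

Fixpoint bracket_table (w : list gen) (n : nat) (F : list bool -> Z) : table :=
  match w with
  | [] => tabulate n F
  | g :: w' =>
      match gen_arity n g with
      | Some n' => bracket_table w' n' (lookup (tabulate n' (gen_op g F)))
      | None => Leaf 0
      end
  end.

Lemma bracket_table_correct w n m F y :
  arity n w = Some m -> length y = m -> lookup (bracket_table w n F) y = bracket w F y.
Proof.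
  revert n F; induction w as [|g w IH]; intros n F Hw Hy; simpl in *.
  - injection Hw as <-. now apply lookup_tabulate.
  - destruct (gen_arity n g) as [n'|] eqn:E; [|discriminate].
    rewrite (IH n' _ Hw Hy). eapply bracket_eq_on; [|exact Hw|exact Hy].
    intros x Hx. now apply lookup_tabulate.
Qed.

Definition window_check (u u' : list gen) (n m : nat) (c : Z) : bool :=
  forallb (fun x =>
    let t := bracket_table u n (indicator x) in
    let t' := bracket_table u' n (indicator x) in
    forallb (fun y => ((lookup t y - c * lookup t' y) mod 41 =? 0)) (bit_strings m))
  (bit_strings n).

Lemma window_check_sound u u' n m c :
  arity n u = Some m -> arity n u' = Some m -> window_check u u' n m c = true ->
  kernel_congruent 41 u u' n m c.
Proof.
  intros Hu Hu' H x y Hx Hy. unfold window_check in H. rewrite forallb_forall in H.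
  specialize (H x (bit_strings_complete n x Hx)). rewrite forallb_forall in H.
  specialize (H y (bit_strings_complete m y Hy)). apply Z.eqb_eq, Z.mod_divide in H; [|lia].
  now rewrite <- (bracket_table_correct u n m _ y Hu Hy),
    <- (bracket_table_correct u' n m _ y Hu' Hy).
Qed.

Ltac arity_bound H :=
  cbn [arity gen_arity din dout X Defs.shift map] in H;
  repeat match type of H with context [Nat.leb ?a ?b] => destruct (Nat.leb_spec a b) end;
  try discriminate; injection H; lia.

Ltac window u u' n m c i :=
  match goal with
  | HF : supported ?k ?F, Hl : arity ?k _ = Some ?m', Hr : arity ?k _ = Some ?m' |- _ =>
      apply (bracket_shift_congruent 41 u u' n m c i k m' F);
      [ reflexivity | reflexivity
      | apply window_check_sound; [reflexivity | reflexivity | vm_compute; reflexivity]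
      | arity_bound Hl | exact Hl | exact Hr | exact HF ]
  end.

(* Reidemeister I multiplies the bracket by [-A^3 = 30] or [-A^-3 = 26], the 5-move by
   [27]; every other move preserves it. *)
Lemma bracket_move l r k m :
  isotopy_move l r \/ five_move l r -> arity k l = Some m -> arity k r = Some m ->
  exists c c', (41 | c * c' - 1) /\
    forall F, supported k F -> forall L, (41 | bracket l F L - c * bracket r F L).
Proof.
  intros [H|[i [-> ->]]] Hl Hr.
  - destruct H; try destruct s;
      match goal with
      | |- context [bracket [G KCup ?j; X true ?j]] => exists 26, 30
      | |- context [bracket [X true ?j; G KCap ?j]] => exists 26, 30
      | |- context [bracket [G KCup ?j; X false ?j]] => exists 30, 26
      | |- context [bracket [X false ?j; G KCap ?j]] => exists 30, 26
      | |- _ => exists 1, 1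
      end;
      (split; [apply Z.mod_divide; [lia | reflexivity]|]); intros F HF L.
    + cbn [bracket gen_op]. rewrite at_pos_far_commute, Z.mul_1_l, Z.sub_diag. apply Z.divide_0_r.
    + window [G KCup 1; G KCap 0] (@nil gen) 1%nat 1%nat 1 i.
    + window [G KCup 0; G KCap 1] (@nil gen) 1%nat 1%nat 1 i.
    + window [G KCup 0; X true 0] [G KCup 0] 0%nat 2%nat 26 i.
    + window [G KCup 0; X false 0] [G KCup 0] 0%nat 2%nat 30 i.
    + window [X true 0; G KCap 0] [G KCap 0] 2%nat 0%nat 26 i.
    + window [X false 0; G KCap 0] [G KCap 0] 2%nat 0%nat 30 i.
    + window [X true 0; X false 0] (@nil gen) 2%nat 2%nat 1 i.
    + window [X false 0; X true 0] (@nil gen) 2%nat 2%nat 1 i.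
    + window [X true 0; X true 1; X true 0] [X true 1; X true 0; X true 1] 3%nat 3%nat 1 i.
    + window [X false 0; X false 1; X false 0] [X false 1; X false 0; X false 1] 3%nat 3%nat 1 i.
    + window [G KCup 0; X true 1] [G KCup 1; X false 0] 1%nat 3%nat 1 i.
    + window [G KCup 0; X false 1] [G KCup 1; X true 0] 1%nat 3%nat 1 i.
    + window [X true 1; G KCap 0] [X false 0; G KCap 1] 3%nat 1%nat 1 i.
    + window [X false 1; G KCap 0] [X true 0; G KCap 1] 3%nat 1%nat 1 i.
  - exists 27, 38. split; [apply Z.mod_divide; [lia | reflexivity]|]. intros F HF L.
    unfold zero_tangle in *. window [G KCap 0; G KCup 0] (htwist 5) 2%nat 2%nat 27 i.
Qed.

Definition bracket_proportional (w w' : list gen) : Prop :=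
  exists c c', (41 | c * c' - 1) /\
    forall x, length x = 2%nat ->
    forall L, (41 | bracket w (indicator x) L - c * bracket w' (indicator x) L).

Lemma bracket_proportional_refl w : bracket_proportional w w.
Proof. exists 1, 1; split; [exists 0; ring|]. intros; exists 0; ring. Qed.

Lemma bracket_proportional_sym w w' : bracket_proportional w w' -> bracket_proportional w' w.
Proof.
  intros (c & c' & [q Hq] & Hc). exists c', c; split; [exists q; lia|]. intros x Hx L.
  destruct (Hc x Hx L) as [q1 Hq1].
  exists (- c' * q1 - q * bracket w' (indicator x) L).
  replace (_ - c' * _) with
    (- c' * (bracket w (indicator x) L - c * bracket w' (indicator x) L)
     - (c * c' - 1) * bracket w' (indicator x) L) by ring.
  rewrite Hq1, Hq. ring.
Qed.

Lemma bracket_proportional_trans w1 w2 w3 :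
  bracket_proportional w1 w2 -> bracket_proportional w2 w3 -> bracket_proportional w1 w3.
Proof.
  intros (c1 & c1' & [q1 Hq1] & Hc1) (c2 & c2' & [q2 Hq2] & Hc2).
  exists (c1 * c2), (c2' * c1'). split.
  - exists (c1 * q2 * c1' + q1).
    replace (c1 * c2 * (c2' * c1') - 1) with (c1 * (c2 * c2' - 1) * c1' + (c1 * c1' - 1)) by ring.
    rewrite Hq1, Hq2. ring.
  - intros x Hx L. destruct (Hc1 x Hx L) as [r1 Hr1], (Hc2 x Hx L) as [r2 Hr2].
    exists (r1 + c1 * r2).
    replace (_ - c1 * c2 * _) with
      ((bracket w1 (indicator x) L - c1 * bracket w2 (indicator x) L)
       + c1 * (bracket w2 (indicator x) L - c2 * bracket w3 (indicator x) L)) by ring.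
    rewrite Hr1, Hr2. ring.
Qed.

Lemma indicator_supported x : supported (length x) (indicator x).
Proof.
  intros y Hy. unfold indicator. destruct (list_eq_dec bool_dec x y) as [->|]; [tauto|reflexivity].
Qed.

Lemma local_step_proportional (mv : list gen -> list gen -> Prop) w w' :
  (forall l r, mv l r -> isotopy_move l r \/ five_move l r) ->
  local_step mv w w' -> bracket_proportional w w'.
Proof.
  intros Hmv (a & l & r & b & k & m & -> & -> & Ha & Hl & Hr & H).
  destruct (bracket_move l r k m (Hmv l r H) Hl Hr) as (c & c' & Hcc' & Hc).
  exists c, c'; split; [exact Hcc'|]. intros x Hx L. rewrite !bracket_app.
  apply bracket_cong; [lia|]. apply Hc.
  apply (bracket_supported a 2 k); [rewrite <- Hx; apply indicator_supported | exact Ha].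
Qed.

Lemma five_equiv_proportional w w' : five_equiv w w' -> bracket_proportional w w'.
Proof.
  induction 1 as [x y [H|H]| | |].
  - apply (local_step_proportional isotopy_move); auto.
  - apply (local_step_proportional five_move); auto.
  - apply bracket_proportional_refl.
  - now apply bracket_proportional_sym.
  - eapply bracket_proportional_trans; eauto.
Qed.

Definition bracket_value (w : list gen) (x L : list bool) : Z :=
  lookup (bracket_table w 2 (indicator x)) L.

Definition not_proportional_check (w w' : list gen) : bool :=
  let entries := map (fun '(x, L) => (bracket_value w x L, bracket_value w' x L))
                     (list_prod (bit_strings 2) (bit_strings 2)) in
  forallb (fun c => existsb (fun '(a, b) => negb ((a - c * b) mod 41 =? 0)) entries)
    (map Z.of_nat (seq 0 41)).

Lemma not_proportional_check_sound w w' :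
  tangle2 w -> tangle2 w' -> not_proportional_check w w' = true -> ~ bracket_proportional w w'.
Proof.
  intros Hw Hw' Hn (c & _ & _ & Hc). unfold not_proportional_check in Hn.
  rewrite forallb_forall in Hn.
  assert (Hr : In (c mod 41) (map Z.of_nat (seq 0 41))).
  { pose proof (Z.mod_pos_bound c 41 ltac:(lia)). apply in_map_iff.
    exists (Z.to_nat (c mod 41)). rewrite Z2Nat.id by lia. split; [reflexivity|].
    apply in_seq. lia. }
  apply Hn, existsb_exists in Hr as [[a b] [Hin Hab]].
  apply in_map_iff in Hin as [[x L] [E Hin]]; injection E as <- <-.
  apply in_prod_iff in Hin as [Hx HL].
  apply bit_strings_length in Hx, HL. unfold bracket_value in Hab.
  rewrite (bracket_table_correct w 2 2 _ L Hw HL), (bracket_table_correct w' 2 2 _ L Hw' HL) in Hab.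
  apply negb_true_iff, Z.eqb_neq in Hab. apply Hab, Z.mod_divide; [lia|].
  destruct (Hc x Hx L) as [q Hq]. exists (q + c / 41 * bracket w' (indicator x) L).
  rewrite Z.mod_eq by lia. lia.
Qed.

(** * Completeness of the class invariant *)

Lemma rep_injective c c' : In c classes -> In c' classes ->
  five_equiv (twists (rep c) []) (twists (rep c') []) -> c = c'.
Proof.
  assert (C : forallb (fun c => forallb (fun c' =>
      if zpair_eq_dec c c' then true
      else not_proportional_check (twists (rep c) []) (twists (rep c') [])) classes) classes = true)
    by (vm_compute; reflexivity).
  intros Hc Hc' H. rewrite forallb_forall in C. specialize (C c Hc).
  rewrite forallb_forall in C. specialize (C c' Hc').
  destruct (zpair_eq_dec c c') as [E|]; [exact E|exfalso].
  apply (not_proportional_check_sound _ _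
           (tangle2_twists _ [] eq_refl) (tangle2_twists _ [] eq_refl) C).
  now apply five_equiv_proportional.
Qed.

Lemma rational_five_equiv_iff T T' p q p' q' :
  rational T p q -> rational T' p' q' ->
  five_equiv T T' <-> class_of (p, q) = class_of (p', q').
Proof.
  intros HT HT'. split; [|now apply five_equiv_of_class_eq].
  intros H. apply rational_class in HT as [Hc HT], HT' as [Hc' HT'].
  apply rep_injective; auto.
  eapply rst_trans; [apply rst_sym, HT|]. eapply rst_trans; [exact H|exact HT'].
Qed.

Close Scope Z_scope.

Theorem proposition2p11 :
  (forall (T : list gen) (p q : Z), rational T p q -> Z.gcd p q = 1%Z ->
     (cong5 q 0 /\ pm5 p 1 -> five_equiv_rat T 1 0) /\
     (cong5 q 0 /\ pm5 p 2 -> five_equiv_rat T 2 5) /\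
     (pm5 q 1 /\ cong5 p 0 -> five_equiv_rat T 0 1) /\
     (pm5 q 2 /\ cong5 p 0 -> five_equiv_rat T 5 2) /\
     (pm5 q 1 /\ cong5 p (- q) -> five_equiv_rat T (-1) 1) /\
     (pm5 q 2 /\ cong5 p (- q) -> five_equiv_rat T 3 2) /\
     (pm5 q 1 /\ cong5 p q -> five_equiv_rat T 1 1) /\
     (pm5 q 2 /\ cong5 p q -> five_equiv_rat T (-3) 2) /\
     (pm5 q 1 /\ cong5 p (-2 * q) -> five_equiv_rat T (-2) 1) /\
     (pm5 q 2 /\ cong5 p (-2 * q) -> five_equiv_rat T 1 2) /\
     (pm5 q 1 /\ cong5 p (2 * q) -> five_equiv_rat T 2 1) /\
     (pm5 q 2 /\ cong5 p (2 * q) -> five_equiv_rat T (-1) 2))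
  /\
  (forall (T T' : list gen) (p q p' q' : Z),
     rational T p q -> rational T' p' q' ->
     Z.gcd p q = 1%Z -> Z.gcd p' q' = 1%Z ->
     (five_equiv T T' <->
        (cong5 q q' /\ cong5 p p') \/ (cong5 q (- q') /\ cong5 p (- p')))).
Proof.
  split.
  - intros T p q HT _.
    repeat split; intros [Hq Hp] T' HT'; apply (rational_five_equiv_iff T T' _ _ _ _ HT HT');
      apply class_of_eq_iff; unfold pm5, cong5 in *; mod5_facts; lia.
  - intros T T' p q p' q' HT HT' _ _.
    rewrite (rational_five_equiv_iff T T' _ _ _ _ HT HT'). apply class_of_eq_iff.
Qed.
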